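(* Fix an integer $r\ge2$. There exist constants $d_0=d_0(r)>0$ and $K=K(r)>0$ such that for every $d>d_0$, every $\lambda\in[0,1]$ with $(r-1)d\lambda^2\le1$, and every BMS channel $P$, $\big|C_{\chi^2}(P^{\times(r-1)}\circ B_{r,\lambda})-s_{r,\lambda}(C_{\chi^2}(P))\big|\le K\lambda^3$, where $s_{r,\lambda}(x)=\lambda^2\cdot\frac12\big((1+x)^{r-1}-(1-x)^{r-1}\big)$.
   Context: $B_{r,\lambda}:\{\pm\}\to\{\pm\}^{r-1}$ is the kernel $B_{r,\lambda}(x|y)=\lambda+2^{-(r-1)}(1-\lambda)$ if $x_i=y$ for all $i$, and $2^{-(r-1)}(1-\lambda)$ otherwise. A channel $P:\{\pm\}\to\mathcal Y$ is BMS if there is a measurable involution $\sigma$ of $\mathcal Y$ with $P(E|+)=P(\sigma(E)|-)$. $P^{\times(r-1)}$ is the $(r-1)$-fold tensor power. $C_{\chi^2}(P)$ is the $\chi^2$-information between $X\sim\mathrm{Unif}(\{\pm\})$ and the output of $P$. *)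

From HB Require Import structures.
From mathcomp Require Import all_boot all_order all_algebra.
From mathcomp Require Import all_classical all_reals all_analysis.
Unset Printing Implicit Defensive.
Import Order.TTheory GRing.Theory Num.Theory.
Local Open Scope classical_set_scope.
Local Open Scope ring_scope.

(* Input alphabet {+,-} is encoded as bool: true = +, false = -. *)

Section Defs.
Context {R : realType}.

(* The kernel B_{r,lambda} : {+-} -> {+-}^(r-1), written with n = r - 1:
   B(x | y) = lam + 2^-n (1 - lam) if x_i = y for all i, 2^-n (1-lam) else. *)
Definition Bker (n : nat) (lam : R) (y : bool) (x : n.-tuple bool) : R :=
  if [forall i : 'I_n, tnth x i == y] then lam + (1 - lam) / 2 ^+ n
  else (1 - lam) / 2 ^+ n.

Context {dY : measure_display} {Y : measurableType dY}.

(* A BMS channel P : {+-} -> Y, given by its densities p x = dP(.|x)/dnu with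
   respect to a sigma-finite reference measure nu on Y, together with a
   measurable involution sigma with P(E|+) = P(sigma(E)|-). *)
Definition BMS_channel (nu : {measure set Y -> \bar R}) (p : bool -> Y -> R)
    (sigma : Y -> Y) : Prop :=
  [/\ sigma_finite [set: Y] nu,
      forall x, measurable_fun [set: Y] (p x),
      forall x y, 0 <= p x y,
      forall x, (\int[nu]_y (p x y)%:E = 1)%E &
      measurable_fun [set: Y] sigma /\ cancel sigma sigma /\
      forall E, measurable E ->
        (\int[nu]_(y in E) (p true y)%:E =
         \int[nu]_(y in sigma @` E) (p false y)%:E)%E].

(* Iterated integral against nu^{(x) n} on n.-tuple Y (equal, by Tonelli, to
   the integral w.r.t. the n-fold product measure for nonnegative integrands). *)
Fixpoint iint (nu : {measure set Y -> \bar R}) (n : nat) :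
    (n.-tuple Y -> \bar R) -> \bar R :=
  match n return (n.-tuple Y -> \bar R) -> \bar R with
  | 0 => fun F => F [tuple]
  | m.+1 => fun F => (\int[nu]_y iint nu m (fun t : m.-tuple Y => F [tuple of y :: t]))%E
  end.

(* Density (w.r.t. nu^{(x) n}) of the composite channel P^{x n} o B_{n+1,lam}:
   input x, B outputs z in {+-}^n, each z_i goes independently through P. *)
Definition comp_density (n : nat) (lam : R) (p : bool -> Y -> R)
    (x : bool) (t : n.-tuple Y) : R :=
  \sum_(z : n.-tuple bool) Bker n lam x z * \prod_(i < n) p (tnth z i) (tnth t i).

End Defs.
Arguments Bker {R} n lam y x.
Arguments comp_density {R dY Y} n lam p x t.

(* Pointwise density of chi^2(P_{XY} || P_X (x) P_Y) for X ~ Unif{+-} and a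
   binary-input channel with output densities q x: with qb = (q + + q -)/2,
   sum_x 1/2 * qb * (q x / qb - 1)^2   (0 where qb = 0). *)
Definition chi2_integrand {R : realType} {T : Type} (q : bool -> T -> R) (t : T) : R :=
  let qb := (q true t + q false t) / 2 in
  \sum_(x : bool) 2^-1 * (qb * (q x t / qb - 1) ^+ 2).

Definition Cchi2 {R : realType} {dY} {Y : measurableType dY}
    (nu : {measure set Y -> \bar R}) (p : bool -> Y -> R) : R :=
  fine (\int[nu]_y (chi2_integrand p y)%:E)%E.

Definition Cchi2_comp {R : realType} {dY} {Y : measurableType dY}
    (nu : {measure set Y -> \bar R}) (n : nat) (lam : R) (p : bool -> Y -> R) : R :=
  fine (iint nu n (fun t : n.-tuple Y => (chi2_integrand (comp_density n lam p) t)%:E)).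

Definition s_fun {R : realType} (r : nat) (lam x : R) : R :=
  lam ^+ 2 * (2^-1 * ((1 + x) ^+ (r - 1) - (1 - x) ^+ (r - 1))).

From HB Require Import structures.
From mathcomp Require Import all_boot all_order all_algebra.
From mathcomp Require Import all_classical all_reals all_analysis.
From mathcomp Require Import measurable_realfun ring lra.
Import Order.TTheory GRing.Theory Num.Theory.
Local Open Scope ring_scope.
Local Open Scope classical_set_scope.

(* Proof of the lambda^3 approximation of C_chi2(P^{x n} o B_{n+1,lam}), n = r-1.
   Write p_+, p_- for the output densities of P, pbar = (p_+ + p_-)/2, and for a
   tuple t: A_x(t) = prod_i p_x(t_i), P(t) = prod_i pbar(t_i).  Then
   (1) the composite channel has densities q_x = lam A_x + (1 - lam) P
       (comp_density_mixture);
   (2) pointwise, the chi2 integrand (q_+ - q_-)^2 / (2 (q_+ + q_-)) equals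
       lam^2 (A_+ - A_-)^2 / (4 P) up to an error (2^n)^3 lam^3 P, as soon as
       lam <= 1/2 (mixture_chi2_approx);
   (3) (A_+ - A_-)^2 / P = sum_{x,x'} sgn x sgn x' prod_i p_x p_x' / pbar (t_i),
       and every term in the two bounds of (2) is a product over i of one fixed
       function of t_i, whose iterated integral is the n-th power of its integral
       (iint_lincomb_prod);
   (4) the one-letter integrals are int pbar = 1 and
       int p_x p_x' / pbar = 1 + sgn x sgn x' C_chi2(P) (cross_density_moment),
       which turns both bounds into s_{r,lam}(C_chi2(P)) -/+ (2^n)^3 lam^3.
   Finally d > 4 and (r-1) d lam^2 <= 1 force lam <= 1/2. *)

Lemma big_option_split (V : nmodType) (I : finType) (F : option I -> V) :
  \sum_k F k = F None + \sum_i F (Some i).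
Proof.
have -> : index_enum (option I) = None :: map Some (index_enum I).
  by rewrite /index_enum !unlock /= /option_enum !unlock.
by rewrite big_cons big_map.
Qed.

Lemma sum_bool_pair (V : nmodType) (F : bool * bool -> V) :
  \sum_u F u = F (true, true) + F (true, false) + F (false, true) + F (false, false).
Proof.
rewrite (eq_bigr (fun u => F (u.1, u.2))) => [|[] //].
by rewrite -(pair_bigA _ (fun x x' => F (x, x'))) !big_bool /= addrA.
Qed.

Lemma sum_tuple_prod (R : comPzSemiRingType) (T : finType) n (F : 'I_n -> T -> R) :
  \sum_(z : n.-tuple T) \prod_(i < n) F i (tnth z i) = \prod_(i < n) \sum_(b : T) F i b.
Proof.
rewrite bigA_distr_bigA /=.
rewrite (reindex (fun z : n.-tuple T => [ffun i => tnth z i])) /=.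
  by apply: eq_bigr => z _; apply: eq_bigr => i _; rewrite ffunE.
exists (fun f : {ffun 'I_n -> T} => [tuple f i | i < n]) => [z _|f _].
  by apply: eq_from_tnth => i; rewrite tnth_mktuple ffunE.
by apply/ffunP => i; rewrite ffunE tnth_mktuple.
Qed.

Definition sgn {R : pzRingType} (x : bool) : R := if x then 1 else -1.

Lemma sq_diff_sgn (R : comPzRingType) (A : bool -> R) :
  (A true - A false) ^+ 2 = \sum_(u : bool * bool) sgn u.1 * sgn u.2 * (A u.1 * A u.2).
Proof. by rewrite sum_bool_pair /sgn /=; ring. Qed.

Definition binary_chi2 {R : fieldType} (u v : R) : R := (u - v) ^+ 2 / (2 * (u + v)).

Lemma chi2_integrandE (R : realType) (T : Type) (q : bool -> T -> R) (t : T) :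
  chi2_integrand q t = binary_chi2 (q true t) (q false t).
Proof.
rewrite /chi2_integrand /binary_chi2 big_bool /=.
have [->|uv0] := eqVneq (q true t + q false t) 0; last by field; rewrite uv0.
by rewrite !mul0r !mulr0 invr0 mulr0 addr0.
Qed.

(* Key pointwise estimate: for likelihoods that are mixtures with weight lam of
   a, b on top of a common part P, with a, b <= M P, the chi2 density is
   lam^2 (a - b)^2 / (4 P) up to M^3 lam^3 P.  The exact error is
   lam^3 (a - b)^2 (2P - a - b) / (4 Q P) with Q >= P when lam <= 1/2. *)
Lemma mixture_chi2_approx {R : realFieldType} (lam M a b P : R) :
  0 <= lam <= 2^-1 -> 1 <= M -> 0 <= a <= M * P -> 0 <= b <= M * P ->
  `| binary_chi2 (lam * a + (1 - lam) * P) (lam * b + (1 - lam) * P)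
     - lam ^+ 2 / 4 * ((a - b) ^+ 2 / P) | <= M ^+ 3 * lam ^+ 3 * P.
Proof.
move=> /andP[lam0 lam_half] M1 /andP[a0 aMP] /andP[b0 bMP].
have [P0|P_neq0] := eqVneq P 0.
  have [-> ->] : a = 0 /\ b = 0 by move: aMP bMP; rewrite P0 mulr0; split; lra.
  by rewrite P0 /binary_chi2 !(mulr0, addr0, subrr, expr0n, mul0r, normr0).
have P_gt0 : 0 < P by rewrite lt_def P_neq0 /=; nra.
pose Q := lam * (a + b) + 2 * (1 - lam) * P.
have PQ : P <= Q by rewrite /Q; nra.
have QP_gt0 : 0 < 4 * Q * P by rewrite !mulr_gt0 // (lt_le_trans P_gt0).
have error_identity : binary_chi2 (lam * a + (1 - lam) * P) (lam * b + (1 - lam) * P)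
    - lam ^+ 2 / 4 * ((a - b) ^+ 2 / P)
    = lam ^+ 3 * ((a - b) ^+ 2 * (2 * P - a - b)) / (4 * Q * P).
  by rewrite /binary_chi2 /Q; field; rewrite P_neq0 gt_eqF // (lt_le_trans P_gt0).
have numerator_bound :
    `|(a - b) ^+ 2 * (2 * P - a - b)| <= (M * P) ^+ 2 * (2 * (M * P)).
  have sq_bound : `|(a - b) ^+ 2| <= (M * P) ^+ 2.
    by rewrite normrX lerXn2r ?nnegrE // ?ler_norml; try (apply/andP; split); nra.
  have lin_bound : `|2 * P - a - b| <= 2 * (M * P).
    by rewrite ler_norml; apply/andP; split; nra.
  by rewrite normrM ler_pM.
rewrite error_identity normrM normfV (gtr0_norm QP_gt0) normrM normrX (ger0_norm lam0).
rewrite ler_pdivrMr //.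
have lam3 : 0 <= lam ^+ 3 by rewrite exprn_ge0.
apply: (le_trans (ler_wpM2l lam3 numerator_bound)).
have -> : lam ^+ 3 * ((M * P) ^+ 2 * (2 * (M * P))) = M ^+ 3 * lam ^+ 3 * P * (2 * P ^+ 2).
  by ring.
have err_scale_ge0 : 0 <= M ^+ 3 * lam ^+ 3 * P.
  by rewrite !mulr_ge0 ?exprn_ge0 // ?ltW // (lt_le_trans ltr01 M1).
by rewrite ler_wpM2l //; nra.
Qed.

Definition mean_density {R : fieldType} {T : Type} (p : bool -> T -> R) (y : T) : R :=
  (p true y + p false y) / 2.

Definition cross_density {R : fieldType} {T : Type} (p : bool -> T -> R) (x x' : bool)
  (y : T) : R := p x y * p x' y / mean_density p y.

(* The one-letter functions whose products appear in the bounds of step (2),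
   indexed by None (for pbar) and by pairs of inputs (for the cross densities),
   together with the values of their integrals, given C = C_chi2(P). *)
Definition moment_density {R : fieldType} {T : Type} (p : bool -> T -> R)
    (k : option (bool * bool)) : T -> R :=
  if k is Some u then cross_density p u.1 u.2 else mean_density p.

Definition moment_value {R : pzRingType} (C : R) (k : option (bool * bool)) : R :=
  if k is Some u then 1 + sgn u.1 * sgn u.2 * C else 1.

Lemma cross_row_sum (R : realFieldType) (T : Type) (p : bool -> T -> R) x y :
  0 <= p true y -> 0 <= p false y ->
  \sum_(x' : bool) cross_density p x x' y = 2 * p x y.
Proof.
move=> p1 p2; rewrite big_bool /= /cross_density /mean_density.
have [m0|m0] := eqVneq (p true y + p false y) 0.
  have [pt0 pf0] : p true y = 0 /\ p false y = 0 by split; lra.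
  by case: x; rewrite pt0 pf0 !(mul0r, mulr0, addr0).
by field; rewrite m0.
Qed.

Lemma chi2_cross (R : realType) (T : Type) (p : bool -> T -> R) y :
  chi2_integrand p y =
  \sum_(u : bool * bool) (4^-1 * (sgn u.1 * sgn u.2)) * cross_density p u.1 u.2 y.
Proof.
rewrite chi2_integrandE /binary_chi2 (@sq_diff_sgn _ (fun x => p x y)) mulr_suml.
apply: eq_bigr => u _; rewrite /cross_density /mean_density.
have [m0|m0] := eqVneq (p true y + p false y) 0; first by rewrite m0 !(mulr0, mul0r, invr0).
by field; rewrite m0.
Qed.

(* Step (1): the composite channel P^{x n} o B_{n+1,lam} outputs, with
   probability lam, n copies of the input each sent through P, and otherwise
   n independent uniformly random symbols each sent through P. *)
Lemma comp_density_mixture {R : realType} {dY : measure_display} {Y : measurableType dY}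
    n (lam : R) (p : bool -> Y -> R) x (t : n.-tuple Y) :
  comp_density n lam p x t = lam * \prod_(i < n) p x (tnth t i) +
    (1 - lam) * \prod_(i < n) mean_density p (tnth t i).
Proof.
pose z0 := [tuple x | i < n].
have Bker_z0 z : Bker n lam x z = lam * (z == z0)%:R + (1 - lam) / 2 ^+ n.
  rewrite /Bker; have -> : [forall i, tnth z i == x] = (z == z0).
    apply/forallP/eqP => [Hz|-> i]; last by rewrite tnth_mktuple.
    by apply: eq_from_tnth => i; rewrite tnth_mktuple; apply/eqP.
  by case: eqP; rewrite ?mulr1 ?mulr0 ?add0r.
rewrite /comp_density; under eq_bigr do rewrite Bker_z0 mulrDl.
rewrite big_split /= (bigD1 z0) //= eqxx mulr1.
rewrite [X in _ + X + _]big1 ?addr0 => [|z z_neq]; last by rewrite (negbTE z_neq) mulr0 mul0r.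
rewrite -mulr_sumr (@sum_tuple_prod _ _ _ (fun i b => p b (tnth t i))).
have -> : \prod_(i < n) p (tnth z0 i) (tnth t i) = \prod_(i < n) p x (tnth t i).
  by apply: eq_bigr => i _; rewrite tnth_mktuple.
rewrite /mean_density big_split /= prodr_const card_ord exprVn.
rewrite mulrA mulrAC; congr (_ + _ * _ * _).
by apply: eq_bigr => i _; rewrite big_bool.
Qed.

(* Needed for the measurability of the cross densities, which divide by pbar. *)
Lemma measurable_inv (R : realType) : measurable_fun [set: R] (@GRing.inv R).
Proof.
rewrite -set_itvNyy (@itv_bndbnd_setU _ _ _ (BLeft 0))//.
apply/measurable_funU => //; split.
- apply: open_continuous_measurable_fun; first exact: interval_open.
  move=> x; rewrite inE/= in_itv/= => x0; apply: inv_continuous.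
  by rewrite lt_eqF.
- rewrite (@itv_bndbnd_setU _ _ _ (BRight 0))//; last by rewrite bnd_simp.
  apply/measurable_funU => //; split.
  + by rewrite set_itv1; exact: measurable_fun_set1.
  + apply: open_continuous_measurable_fun; first exact: interval_open.
    move=> x; rewrite inE/= in_itv/= andbT => x0; apply: inv_continuous.
    by rewrite gt_eqF.
Qed.

Section integration.
Context {R : realType} {dY : measure_display} {Y : measurableType dY}.
Variable nu : {measure set Y -> \bar R}.
Local Open Scope ereal_scope.

(* The integral is monotone even for non-measurable integrands, since it is a
   difference of suprema over simple functions below f^+ and f^-; this is what
   lets us compare iterated integrals, whose partial integrands are not known
   to be measurable. *)
Lemma integral_le_pointwise (f g : Y -> \bar R) : (forall y, f y <= g y) ->
  \int[nu]_y f y <= \int[nu]_y g y.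
Proof.
move=> fg; rewrite /integral !patch_setT; apply: leeB; apply: ereal_sup_le.
- move=> _ [h hf <-]; exists h => // y; apply: le_trans (hf y) _.
  by apply: (@funepos_le _ _ setT) => [z _|]; [exact: fg | exact: in_setT].
- move=> _ [h hf <-]; exists h => // y; apply: le_trans (hf y) _.
  by apply: (@funeneg_le _ _ setT) => [z _|]; [exact: fg | exact: in_setT].
Qed.

Lemma iint_le n (F G : n.-tuple Y -> \bar R) : (forall t, F t <= G t) ->
  iint nu n F <= iint nu n G.
Proof.
elim: n F G => [|n IH] F G FG /=; first exact: FG.
by apply: integral_le_pointwise => y; apply: IH => t; exact: FG.
Qed.

Lemma integrable_ge0_finite (g : Y -> R) (a : R) : measurable_fun setT g ->
  (forall y, (0 <= g y)%R) -> \int[nu]_y (g y)%:E = a%:E -> nu.-integrable setT (EFin \o g).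
Proof.
move=> mg g0 ga; apply/integrableP; split; first exact/measurable_EFinP.
by under eq_integral do rewrite gee0_abs ?lee_fin //; rewrite ga ltry.
Qed.

Lemma integralZl_fine (g : Y -> R) (c : R) : nu.-integrable setT (EFin \o g) ->
  \int[nu]_y (c * g y)%:E = (c * fine (\int[nu]_y (g y)%:E))%:E.
Proof.
move=> intg; have fin_g : \int[nu]_y (g y)%:E \is a fin_num by exact: integrable_fin_num.
under eq_integral do rewrite EFinM.
rewrite integralZl //.
by move: fin_g; set J := \int[nu]_y (g y)%:E => /fineK <-.
Qed.

Lemma integral_lincomb (I : finType) (G : I -> Y -> R) (c : I -> R) :
  (forall k, nu.-integrable setT (EFin \o G k)) ->
  \int[nu]_y (\sum_k c k * G k y)%:E = (\sum_k c k * fine (\int[nu]_y (G k y)%:E))%:E.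
Proof.
move=> intG; have intcG k : nu.-integrable setT (fun y => (c k * G k y)%:E).
  by under eq_fun do rewrite EFinM; apply: integrableZl => //; exact: intG.
under eq_integral do rewrite -sumEFin.
rewrite integral_sum // -sumEFin; apply: eq_bigr => k _.
exact: integralZl_fine.
Qed.

Lemma iint_lincomb_prod (I : finType) (G : I -> Y -> R) (c : I -> R) n :
  (forall k, nu.-integrable setT (EFin \o G k)) ->
  iint nu n (fun t => (\sum_k c k * \prod_(i < n) G k (tnth t i))%:E) =
  (\sum_k c k * fine (\int[nu]_y (G k y)%:E) ^+ n)%:E.
Proof.
move=> intG; elim: n c => [|n IH] c /=.
  by congr EFin; apply: eq_bigr => k _; rewrite big_ord0 expr0.
have peel_first y : (fun t : n.-tuple Y =>
    (\sum_k c k * \prod_(i < n.+1) G k (tnth [tuple of y :: t] i))%:E) =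
    (fun t => (\sum_k (c k * G k y) * \prod_(i < n) G k (tnth t i))%:E).
  apply: funext => t; congr EFin; apply: eq_bigr => k _.
  rewrite big_ord_recl tnth0 mulrA; congr (_ * _)%R.
  by apply: eq_bigr => i _; rewrite tnthS.
under eq_integral => y _ do rewrite peel_first IH.
under eq_integral => y _ do under eq_bigr => k _ do rewrite mulrAC.
by rewrite integral_lincomb //; congr EFin; apply: eq_bigr => k _; rewrite exprSr mulrA.
Qed.
End integration.

Section binary_input_channel.
Context {R : realType} {dY : measure_display} {Y : measurableType dY}.
Variables (nu : {measure set Y -> \bar R}) (p : bool -> Y -> R).
Hypothesis p_meas : forall x, measurable_fun setT (p x).
Hypothesis p_ge0 : forall x y, 0 <= p x y.
Hypothesis p_int1 : forall x, (\int[nu]_y (p x y)%:E = 1)%E.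

Lemma mean_density_ge0 y : 0 <= mean_density p y.
Proof. by rewrite /mean_density divr_ge0 ?addr_ge0. Qed.

Lemma cross_density_ge0 x x' y : 0 <= cross_density p x x' y.
Proof. by rewrite /cross_density !mulr_ge0 ?invr_ge0 ?mean_density_ge0. Qed.

Lemma mean_density_measurable : measurable_fun setT (mean_density p).
Proof. by apply: measurable_funM => //; exact: measurable_funD. Qed.

Lemma cross_density_measurable x x' : measurable_fun setT (cross_density p x x').
Proof.
apply: measurable_funM; first exact: measurable_funM.
exact: measurableT_comp (measurable_inv R) mean_density_measurable.
Qed.

(* Domination p_x p_x' / pbar <= 2 p_x, since p_x' <= 2 pbar. *)
Lemma cross_density_le x x' y : cross_density p x x' y <= 2 * p x y.
Proof.
rewrite /cross_density; have [m0|m0] := eqVneq (mean_density p y) 0.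
  by rewrite m0 invr0 mulr0 mulr_ge0.
have m_gt0 : 0 < mean_density p y by rewrite lt_def m0 mean_density_ge0.
rewrite ler_pdivrMr // -mulrA mulrCA ler_wpM2l // /mean_density.
by case: x'; have := p_ge0 true y; have := p_ge0 false y; lra.
Qed.

Lemma density_integrable x : nu.-integrable setT (EFin \o p x).
Proof. exact: integrable_ge0_finite (p_int1 x). Qed.

Lemma mean_density_integral : (\int[nu]_y (mean_density p y)%:E = 1%:E)%E.
Proof.
have -> : mean_density p = fun y => \sum_(x : bool) 2^-1 * p x y.
  by apply: funext => y; rewrite big_bool /mean_density /=; field.
rewrite integral_lincomb; last exact: density_integrable.
by rewrite big_bool /= !p_int1 /=; congr EFin; field.
Qed.

Lemma cross_density_integrable x x' : nu.-integrable setT (EFin \o cross_density p x x').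
Proof.
have int2p : nu.-integrable setT (fun y => (2 * p x y)%:E).
  by under eq_fun do rewrite EFinM; apply: integrableZl => //; exact: density_integrable.
apply: le_integrable int2p => //; first exact/measurable_EFinP/cross_density_measurable.
move=> y _; rewrite !gee0_abs ?lee_fin ?cross_density_ge0 ?mulr_ge0 ?p_ge0 //.
exact: cross_density_le.
Qed.

Lemma moment_density_integrable k : nu.-integrable setT (EFin \o moment_density p k).
Proof.
case: k => [[x x']|] /=; first exact: cross_density_integrable.
exact: integrable_ge0_finite mean_density_measurable mean_density_ge0 mean_density_integral.
Qed.

(* Step (4): the second moments a_{xx'} = int p_x p_x' / pbar are symmetric,
   satisfy a_{x+} + a_{x-} = 2 (cross_row_sum) and
   C_chi2(P) = (a_{++} - a_{+-} - a_{-+} + a_{--}) / 4 (chi2_cross);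
   solving this linear system gives a_{xx'} = 1 + sgn x sgn x' C_chi2(P). *)
Lemma cross_density_moment x x' :
  fine (\int[nu]_y (cross_density p x x' y)%:E)%E = 1 + sgn x * sgn x' * Cchi2 nu p.
Proof.
pose al u := fine (\int[nu]_y (cross_density p u.1 u.2 y)%:E)%E.
have row_sum x0 : al (x0, true) + al (x0, false) = 2.
  have := @integral_lincomb _ _ _ nu _ (cross_density p x0) (fun=> 1)
    (cross_density_integrable x0).
  under eq_integral do under eq_bigr do rewrite mul1r.
  under eq_integral do rewrite cross_row_sum //.
  rewrite integralZl_fine; last exact: density_integrable.
  by rewrite p_int1 big_bool /= !mul1r mulr1 => -[].
have sym : al (true, false) = al (false, true).
  rewrite /al /=; congr (fine _); apply: eq_integral => y _.
  by rewrite /cross_density [p false y * _]mulrC.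
have chi2_sum : Cchi2 nu p = \sum_u 4^-1 * (sgn u.1 * sgn u.2) * al u.
  rewrite /Cchi2; under eq_integral do rewrite chi2_cross.
  rewrite (@integral_lincomb _ _ _ nu _ (fun u => cross_density p u.1 u.2)) //.
  by move=> u; exact: cross_density_integrable.
move: chi2_sum (row_sum true) (row_sum false) sym; rewrite sum_bool_pair /al /sgn /=.
by case: x; case: x' => /=; lra.
Qed.

Lemma moment_density_moment k :
  fine (\int[nu]_y (moment_density p k y)%:E)%E = moment_value (Cchi2 nu p) k.
Proof.
case: k => [[x x']|]; first exact: cross_density_moment.
by rewrite /= mean_density_integral.
Qed.

Lemma prod_cross_density n (t : n.-tuple Y) x x' :
  \prod_(i < n) cross_density p x x' (tnth t i) =
  (\prod_(i < n) p x (tnth t i)) * (\prod_(i < n) p x' (tnth t i))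
    / \prod_(i < n) mean_density p (tnth t i).
Proof. by rewrite /cross_density big_split big_split /= prodfV. Qed.

(* Step (2) for the composite channel: with A_x = prod_i p_x(t_i) <= 2^n P,
   the leading term lam^2 (A_+ - A_-)^2 / (4 P) is a signed sum of products of
   cross densities. *)
Lemma comp_chi2_pointwise n (lam : R) (t : n.-tuple Y) : 0 <= lam <= 2^-1 ->
  `| chi2_integrand (comp_density n lam p) t -
     \sum_(u : bool * bool) lam ^+ 2 / 4 * (sgn u.1 * sgn u.2)
       * \prod_(i < n) cross_density p u.1 u.2 (tnth t i) |
  <= (2 ^+ n) ^+ 3 * lam ^+ 3 * \prod_(i < n) mean_density p (tnth t i).
Proof.
move=> lam_bd; set A := fun x => \prod_(i < n) p x (tnth t i).
set P := \prod_(i < n) mean_density p (tnth t i).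
have A_bd x : 0 <= A x <= 2 ^+ n * P.
  have -> : 2 ^+ n * P = \prod_(i < n) (2 * mean_density p (tnth t i)).
    by rewrite big_split /= prodr_const card_ord.
  rewrite prodr_ge0 //= ler_prod // => i _; rewrite p_ge0 /= /mean_density.
  by case: x; have := p_ge0 true (tnth t i); have := p_ge0 false (tnth t i); lra.
have M1 : 1 <= 2 ^+ n :> R by rewrite exprn_ege1 // ler1n.
have := mixture_chi2_approx lam (2 ^+ n) _ _ P lam_bd M1 (A_bd true) (A_bd false).
rewrite chi2_integrandE !comp_density_mixture -/(A true) -/(A false) -/P.
suff -> : \sum_(u : bool * bool) lam ^+ 2 / 4 * (sgn u.1 * sgn u.2)
    * \prod_(i < n) cross_density p u.1 u.2 (tnth t i)
    = lam ^+ 2 / 4 * ((A true - A false) ^+ 2 / P) by [].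
rewrite sq_diff_sgn mulr_suml mulr_sumr; apply: eq_bigr => u _.
by rewrite prod_cross_density -/(A u.1) -/(A u.2) -/P !mulrA.
Qed.

(* The main estimate for every binary-input channel and lam <= 1/2: integrate
   the two bounds of comp_chi2_pointwise, written as combinations of tensor
   powers of the moment densities, and evaluate them with the moments. *)
Lemma Cchi2_comp_approx n (lam : R) : 0 <= lam <= 2^-1 ->
  `| Cchi2_comp nu n lam p
     - lam ^+ 2 * (2^-1 * ((1 + Cchi2 nu p) ^+ n - (1 - Cchi2 nu p) ^+ n)) |
  <= (2 ^+ n) ^+ 3 * lam ^+ 3.
Proof.
move=> lam_bd; set K := (2 ^+ n) ^+ 3 * lam ^+ 3; set s := lam ^+ 2 * _.
pose coef (e : R) (k : option (bool * bool)) : R :=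
  if k is Some u then lam ^+ 2 / 4 * (sgn u.1 * sgn u.2) else e.
pose bound e t := (\sum_k coef e k * \prod_(i < n) moment_density p k (tnth t i))%:E.
have iint_bound e : iint nu n (bound e) = (e + s)%:E.
  rewrite /bound iint_lincomb_prod; last exact: moment_density_integrable.
  under eq_bigr do rewrite moment_density_moment.
  rewrite big_option_split sum_bool_pair /= /sgn !(mul1r, mulr1, mulN1r, opprK) expr1n.
  by congr EFin; rewrite /s; field.
have chi2_between t : (bound (- K)%R t <= (chi2_integrand (comp_density n lam p) t)%:E <=
    bound K t)%E.
  rewrite /bound !lee_fin !big_option_split /=.
  have := comp_chi2_pointwise n lam t lam_bd; rewrite ler_distl -/K.
  by move=> /andP[lo hi]; apply/andP; split; lra.
rewrite /Cchi2_comp; set I := iint nu n _.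
have /andP[lo hi] : (iint nu n (bound (- K)%R) <= I <= iint nu n (bound K))%E.
  by apply/andP; split; apply: iint_le => t; case/andP: (chi2_between t).
move: lo hi; rewrite !iint_bound; case: I => [v||] //=; rewrite !lee_fin => lo hi.
by rewrite ler_distl; apply/andP; split; lra.
Qed.
End binary_input_channel.

Lemma small_lambda {R : realFieldType} (m : nat) (d lam : R) : (1 <= m)%N -> 4 < d ->
  0 <= lam -> m%:R * d * lam ^+ 2 <= 1 -> lam <= 2^-1.
Proof.
move=> m_ge1 d_gt4 lam0 hd.
have m_ge1R : 1 <= m%:R :> R by rewrite ler1n.
have : 4 * lam ^+ 2 <= m%:R * d * lam ^+ 2 by rewrite ler_wpM2r ?exprn_ge0 //; nra.
nra.
Qed.

Theorem mainTheorem16 (R : realType) (r : nat) (hr : (2 <= r)%N) :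
  exists d0 K : R, 0 < d0 /\ 0 < K /\
  forall (d lam : R), d0 < d -> 0 <= lam <= 1 ->
    (r - 1)%:R * d * lam ^+ 2 <= 1 ->
  forall (dY : measure_display) (Y : measurableType dY)
         (nu : {measure set Y -> \bar R}) (p : bool -> Y -> R) (sigma : Y -> Y),
    BMS_channel nu p sigma ->
    `| Cchi2_comp nu (r - 1) lam p - s_fun r lam (Cchi2 nu p) | <= K * lam ^+ 3.
Proof.
exists 4, ((2 ^+ (r - 1)) ^+ 3); split; first by rewrite ltr0n.
split; first by rewrite !exprn_gt0.
move=> d lam d_gt4 /andP[lam0 _] hd dY Y nu p sigma [_ p_meas p_ge0 p_int1 _].
have lam_half : lam <= 2^-1 by apply: small_lambda hd => //; rewrite subn_gt0.
by apply: Cchi2_comp_approx => //; rewrite lam0.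
Qed.
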